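(* Let $(\mathcal{A},e)$ be an order-unit space and let $L$ be a Lip-norm on $\mathcal{A}$ which is closed. Let $\tilde{\mathcal{A}}=\mathcal{A}/\mathbb{R}e$ with quotient norm $\|\cdot\|^{\sim}$, let $\tilde L$ be the norm on $\tilde{\mathcal{A}}$ induced by $L$ (i.e. $\tilde L(\tilde a)=L(a)$), and let $\mathcal{K}=\{\tilde a\in\tilde{\mathcal{A}}:\tilde L(\tilde a)\le 1\}$. Then $\mathcal{K}$ is a compact convex set for $\|\cdot\|^{\sim}$, and, letting $Af_0(\mathcal{K})$ denote the Banach space of all $\|\cdot\|^{\sim}$-continuous affine real functions on $\mathcal{K}$ taking the value $0$ at $0$, equipped with the supremum norm, the map $\sigma$ defined by $\sigma(\tilde a)(f)=f(\tilde a)$ is an isometric isomorphism of the normed space $(\tilde{\mathcal{A}},\tilde L)$ onto the Banach space dual of $Af_0(\mathcal{K})$.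
   Context: An order-unit space is a real partially ordered vector space $\mathcal{A}$ with a distinguished element $e$ such that (i) for each $a$ there is $r\in\mathbb{R}$ with $a\le re$, and (ii) if $a\le re$ for all $r>0$ then $a\le 0$; it carries the norm $\|a\|=\inf\{r\ge0:-re\le a\le re\}$ and need not be complete. The quotient norm on $\mathcal{A}/\mathbb{R}e$ is $\|\tilde a\|^{\sim}=\inf_{t\in\mathbb{R}}\|a+te\|$. A seminorm $L$ is lower semicontinuous if $\{a: L(a)\le 1\}$ is norm-closed in $\mathcal{A}$. A Lip-norm on $\mathcal{A}$ is a finite-valued seminorm $L$ on $\mathcal{A}$ such that: (1) $L(a)=0$ iff $a\in\mathbb{R}e$; (2) $L$ is lower semicontinuous; (3) the image of $\{a\in\mathcal{A}: L(a)\le1\}$ in $\mathcal{A}/\mathbb{R}e$ is totally bounded for $\|\cdot\|^{\sim}$. $L$ is closed if $\{a\in\mathcal{A}:L(a)\le 1\}$ is complete for the metric from $\|\cdot\|$. *)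

From HB Require Import structures.
From mathcomp Require Import all_boot all_order all_algebra.
From mathcomp Require Import all_classical all_reals.
Set Implicit Arguments. Unset Strict Implicit. Unset Printing Implicit Defensive.
Import Order.TTheory GRing.Theory Num.Theory.
Local Open Scope ring_scope.
Local Open Scope classical_set_scope.

(* Elements of the quotient A/Re are represented by elements of A. *)

Section OrderUnit.
Context {R : realType} {A : lmodType R}.
Implicit Types (le : A -> A -> Prop) (e : A) (L : A -> R).

Definition ordered_vector_space le :=
  [/\ (forall a, le a a),
      (forall a b, le a b -> le b a -> a = b),
      (forall a b c, le a b -> le b c -> le a c),
      (forall a b c, le a b -> le (a + c) (b + c)) &
      (forall (t : R) a b, 0 <= t -> le a b -> le (t *: a) (t *: b))].

Definition is_order_unit_space le e :=
  [/\ ordered_vector_space le,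
      (forall a, exists r : R, le a (r *: e)) &
      (forall a, (forall r : R, 0 < r -> le a (r *: e)) -> le a 0)].

Definition ou_norm le e (a : A) : R :=
  inf [set r : R | 0 <= r /\ le (- (r *: e)) a /\ le a (r *: e)].

Definition qnorm le e (a : A) : R :=
  inf [set ou_norm le e (a + t *: e) | t in [set: R]].

Definition seminorm L :=
  (forall a b, L (a + b) <= L a + L b) /\ (forall (c : R) a, L (c *: a) = `|c| * L a).

Definition unit_ball L : set A := [set a | L a <= 1].

Definition lower_semicontinuous le e L :=
  forall a, (forall eps : R, 0 < eps -> exists b, L b <= 1 /\ ou_norm le e (a - b) < eps) ->
    L a <= 1.

Definition q_totally_bounded le e (S : set A) :=
  forall eps : R, 0 < eps -> exists s : seq A,
    forall a, S a -> exists2 b, b \in s & qnorm le e (a - b) < eps.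

Definition lip_norm le e L :=
  [/\ seminorm L,
      (forall a, L a = 0 <-> exists t : R, a = t *: e),
      lower_semicontinuous le e L &
      q_totally_bounded le e (unit_ball L)].

Definition closed_seminorm le e L :=
  forall u : nat -> A, (forall n, L (u n) <= 1) ->
    (forall eps : R, 0 < eps -> exists N, forall m n, (N <= m)%N -> (N <= n)%N ->
        ou_norm le e (u m - u n) < eps) ->
    exists2 a, L a <= 1 & (forall eps : R, 0 < eps -> exists N, forall n, (N <= n)%N ->
        ou_norm le e (u n - a) < eps).

Definition q_open le e (U : set A) :=
  forall x, U x -> exists2 eps : R, 0 < eps & forall y, qnorm le e (y - x) < eps -> U y.

Definition q_compact le e (K : set A) :=
  forall C : set (set A), (forall U, C U -> q_open le e U) ->
    (forall a, K a -> exists2 U, C U & U a) ->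
    exists (n : nat) (g : 'I_n -> set A),
      (forall i, C (g i)) /\ (forall a, K a -> exists i, g i a).

Definition q_convex (K : set A) :=
  forall a b (t : R), K a -> K b -> 0 <= t <= 1 -> K (t *: a + (1 - t) *: b).

(* Af_0(K): continuous affine real functions on K (= {L <= 1} / Re) vanishing at 0.
   A function on K is represented by f : A -> R, only its values on K matter. *)
Definition Af0 le e L (f : A -> R) :=
  [/\ f 0 = 0,
      (forall a, L a <= 1 -> forall eps : R, 0 < eps -> exists2 delta : R, 0 < delta &
          forall b, L b <= 1 -> qnorm le e (b - a) < delta -> `|f b - f a| < eps) &
      (forall a b (t : R), L a <= 1 -> L b <= 1 -> 0 <= t <= 1 ->
          f (t *: a + (1 - t) *: b) = t * f a + (1 - t) * f b)].

Definition supnorm L (f : A -> R) : R := sup [set `|f a| | a in unit_ball L].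

(* the unique linear extension to A/Re of an f in Af_0(K), evaluated at a:
   f(a~) := r f(a~ / r) for r = L a + 1 (so that a / r lies in K) *)
Definition ext L (f : A -> R) (a : A) : R := (L a + 1) * f ((L a + 1)^-1 *: a).

Definition sigma L (a : A) : (A -> R) -> R := fun f => ext L f a.

Definition is_dual_elem le e L (phi : (A -> R) -> R) :=
  [/\ (forall f g, Af0 le e L f -> Af0 le e L g -> (forall a, L a <= 1 -> f a = g a) ->
          phi f = phi g),
      (forall f g (c : R), Af0 le e L f -> Af0 le e L g ->
          phi (fun a => c * f a + g a) = c * phi f + phi g) &
      (exists C : R, forall f, Af0 le e L f -> `|phi f| <= C * supnorm L f)].

Definition dual_norm le e L (phi : (A -> R) -> R) : R :=
  sup [set `|phi f| | f in [set f | Af0 le e L f /\ supnorm L f <= 1]].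

End OrderUnit.

From HB Require Import structures.
From mathcomp Require Import all_boot all_order all_algebra.
From mathcomp Require Import all_classical all_reals.
From mathcomp Require Import ring lra.
Import Order.TTheory GRing.Theory Num.Theory.
Set Implicit Arguments. Unset Strict Implicit. Unset Printing Implicit Defensive.
Local Open Scope ring_scope.
Local Open Scope classical_set_scope.

(* The unit ball K of L, a subset of A/Re, is totally bounded by assumption and
   complete because Cauchy sequences of classes lift to Cauchy sequences of
   representatives; hence it is compact.  An element f of Af_0(K) extends
   positively homogeneously, hence linearly, to A/Re, and sigma(a~)(f) is that
   extension at a~.  The dual norm of sigma(a~) is at most L(a) by homogeneity;
   it is at least L(a) by Hahn-Banach applied to the inf-convolutions of L with
   the multiples M ||.||~, which increase to L by lower semicontinuity and whose
   norming functionals are Lipschitz, hence in Af_0(K).  Finally, a functional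
   phi in the dual that is no multiple of an evaluation on K is, by compactness,
   separated from every point of K by finitely many f_i; a least-squares
   argument on the convex set K then produces an h in Af_0(K) with
   phi(h) > c sup_K |h| although |phi| <= c sup_K |.|. *)

Section Seminorm.
Context {R : realType} {V : lmodType R}.
Implicit Types (p : V -> R) (a b c : V).

Lemma seminorm_of_le p : (forall a b, p (a + b) <= p a + p b) ->
  (forall (k : R) a, p (k *: a) <= `|k| * p a) -> seminorm p.
Proof.
move=> pD pZ; split=> // k a; apply/eqP; rewrite eq_le pZ /=.
have [->|k0] := eqVneq k 0.
  have := pD 0 0; have := pZ 0 0; rewrite !scale0r addr0 normr0 !mul0r; lra.
have := pZ k^-1 (k *: a); rewrite scalerA mulVf // scale1r normrV ?unitfE //.
by rewrite ler_pdivlMl ?normr_gt0.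
Qed.

Variable p : V -> R.
Hypothesis hp : seminorm p.

Lemma seminormD a b : p (a + b) <= p a + p b.
Proof. by case: hp. Qed.

Lemma seminormZ (k : R) a : p (k *: a) = `|k| * p a.
Proof. by case: hp. Qed.

Lemma seminorm0 : p 0 = 0.
Proof. by rewrite -(scale0r 0) seminormZ normr0 mul0r. Qed.

Lemma seminormN a : p (- a) = p a.
Proof. by rewrite -scaleN1r seminormZ normrN normr1 mul1r. Qed.

Lemma seminorm_ge0 a : 0 <= p a.
Proof. by have := seminormD a (- a); rewrite subrr seminorm0 seminormN; lra. Qed.

Lemma seminormBC a b : p (a - b) = p (b - a).
Proof. by rewrite -seminormN opprB. Qed.

Lemma seminormB_tri a b c : p (a - c) <= p (a - b) + p (b - c).
Proof. by have := seminormD (a - b) (b - c); rewrite addrA subrK. Qed.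

Lemma seminormMl (M : R) : 0 <= M -> seminorm (fun a => M * p a).
Proof.
move=> M0; split=> [a b|k a]; first by rewrite -mulrDr ler_wpM2l ?seminormD.
by rewrite seminormZ mulrCA.
Qed.

Lemma seminorm_geometric (y : nat -> V) (C : R) :
  (forall n, p (y n.+1 - y n) <= C * 2 ^- n) ->
  forall n m, (n <= m)%N -> p (y m - y n) <= 2 * C * 2 ^- n.
Proof.
move=> step n m /subnK <-; rewrite addnC.
have pos k : 0 < 2 ^- k :> R by rewrite invr_gt0 exprn_gt0.
have C0 : 0 <= C.
  by have := le_trans (seminorm_ge0 _) (step 0%N); rewrite pmulr_lge0.
suff tele j : p (y (n + j)%N - y n) <= 2 * C * 2 ^- n - 2 * C * 2 ^- (n + j).
  by apply: le_trans (tele _) _; rewrite gerDl oppr_le0 !mulr_ge0 // ltW.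
elim: j => [|j IH]; first by rewrite addn0 !subrr seminorm0.
apply: le_trans (seminormB_tri _ (y (n + j)%N) _) _; rewrite addnS.
have half : 2 ^- (n + j).+1 = 2 ^- (n + j) / 2 :> R by rewrite exprSr invfM.
by move: (step (n + j)%N) IH; rewrite half; lra.
Qed.
End Seminorm.

Section UnitBall.
Context {R : realType} {V : lmodType R} (L : V -> R).
Hypothesis hL : seminorm L.

Lemma unit_ball0 : unit_ball L 0.
Proof. by rewrite /unit_ball /= seminorm0. Qed.

Lemma unit_ballN a : unit_ball L a -> unit_ball L (- a).
Proof. by rewrite /unit_ball /= seminormN. Qed.

Lemma unit_ball_scale (r : R) a : 0 < r -> L a <= r -> L (r^-1 *: a) <= 1.
Proof.
move=> r0 ar; rewrite seminormZ // ger0_norm; last by rewrite invr_ge0 ltW.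
by rewrite mulrC ler_pdivrMr // mul1r.
Qed.

Lemma unit_ball_convex : q_convex (unit_ball L).
Proof.
move=> a b t; rewrite /unit_ball /= => La Lb /andP[t0 t1].
apply: le_trans (seminormD hL _ _) _.
rewrite !seminormZ // ger0_norm // ger0_norm ?subr_ge0 //.
by move: (mulr_ge0 t0 (seminorm_ge0 hL a)) (ler_wpM2l t0 La); nra.
Qed.

End UnitBall.

Section LeastSquares.
Context {R : realType} {V : lmodType R} (K : set V) (I : Type) (s : seq I).
Variables (F : I -> V -> R) (c : I -> R).
Hypothesis K_convex : q_convex K.
Hypothesis F_affine : forall i a b (t : R), K a -> K b -> 0 <= t <= 1 ->
  F i (t *: a + (1 - t) *: b) = t * F i a + (1 - t) * F i b.

Let G x := \sum_(i <- s) (F i x - c i) ^+ 2.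

(* First-order optimality: moving from [x0] towards [y] decreases [G] at rate
   twice the increase of the residual-weighted combination of the [F i]. *)
Lemma least_squares_optimality x0 : K x0 -> (forall x, K x -> G x0 <= G x) ->
  forall y, K y ->
  \sum_(i <- s) (c i - F i x0) * F i y <= \sum_(i <- s) (c i - F i x0) * F i x0.
Proof.
move=> Kx0 x0min y Ky; rewrite leNgt; apply/negP; rewrite -subr_gt0 -sumrB.
set D := \sum_(i <- s) _ => D0.
set S := \sum_(i <- s) (F i y - F i x0) ^+ 2.
have S0 : 0 <= S by apply: sumr_ge0 => i _; apply: sqr_ge0.
have expand t : 0 <= t <= 1 ->
    G (t *: y + (1 - t) *: x0) - G x0 = t ^+ 2 * S - 2 * t * D.
  move=> t01; rewrite /G -sumrB.
  transitivity (\sum_(i <- s) (t ^+ 2 * (F i y - F i x0) ^+ 2 -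
                               2 * t * ((c i - F i x0) * F i y - (c i - F i x0) * F i x0))).
    by apply: eq_bigr => i _; rewrite F_affine //; ring.
  by rewrite sumrB -!mulr_sumr.
pose t := Num.min 1 (D / (S + 1)).
have S1 : 0 < S + 1 by rewrite ltr_wpDl.
have t0 : 0 < t by rewrite lt_min ltr01 divr_gt0.
have t1 : t <= 1 by rewrite ge_min lexx.
have tD : t * (S + 1) <= D by rewrite -ler_pdivlMr // ge_min lexx orbT.
have t01 : 0 <= t <= 1 by rewrite t1 ltW.
have := x0min _ (K_convex Ky Kx0 t01); rewrite -subr_ge0 expand //.
by move: (ler_wpM2l (ltW t0) tD) (mulr_gt0 t0 D0); nra.
Qed.

End LeastSquares.

Section InfSeminorm.
Context {R : realType} {V : lmodType R}.

Lemma inf_seminorm (S : V -> set R) :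
  (forall a, S a !=set0) -> (forall a, lbound (S a) 0) ->
  (forall a b r s, S a r -> S b s -> exists2 u, S (a + b) u & u <= r + s) ->
  (forall (k : R) a r, S a r -> exists2 u, S (k *: a) u & u <= `|k| * r) ->
  seminorm (fun a => inf (S a)).
Proof.
move=> S0 Sge0 SD SZ.
have Sinf a : has_inf (S a) by split; [exact: S0 | exists 0].
have Sle a r : S a r -> inf (S a) <= r by move=> Sr; apply: ge_inf => //; exists 0.
apply: seminorm_of_le => [a b|k a]; apply/ler_addgt0Pr => eps eps0.
- have [r Sr hr] := inf_adherent (divr_gt0 eps0 (ltr0Sn _ 1)) (Sinf a).
  have [s Ss hs] := inf_adherent (divr_gt0 eps0 (ltr0Sn _ 1)) (Sinf b).
  have [u Su hu] := SD _ _ _ _ Sr Ss.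
  by apply: le_trans (Sle _ _ Su) _; lra.
- have k1 : 0 < `|k| + 1 by rewrite ltr_wpDl.
  have [r Sr hr] := inf_adherent (divr_gt0 eps0 k1) (Sinf a).
  have [u Su hu] := SZ k _ _ Sr; apply: le_trans (Sle _ _ Su) _.
  have kd : eps / (`|k| + 1) * (`|k| + 1) = eps by rewrite divfK ?gt_eqF.
  move: (normr_ge0 k) (divr_gt0 eps0 k1) kd hu hr.
  move: (eps / _) => d; nra.
Qed.
End InfSeminorm.

Section QuotientSeminorm.
Context {R : realType} {V : lmodType R} (p : V -> R) (e : V).
Hypothesis hp : seminorm p.

Definition qseminorm (a : V) : R := inf [set p (a + t *: e) | t in [set: R]].

Let lbound_shifts a : lbound [set p (a + t *: e) | t in [set: R]] 0.
Proof. by move=> _ [t _ <-]; apply: seminorm_ge0. Qed.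

Lemma qseminorm_seminorm : seminorm qseminorm.
Proof.
apply: inf_seminorm => [a|a|a b _ _ [t _ <-] [s _ <-]|k a _ [t _ <-]].
- by exists (p (a + 0 *: e)), 0.
- exact: lbound_shifts.
- exists (p (a + b + (t + s) *: e)); first by exists (t + s).
  by rewrite scalerDl addrACA; apply: seminormD.
- exists (p (k *: a + (k * t) *: e)); first by exists (k * t).
  by rewrite -scalerA -scalerDr seminormZ.
Qed.

Lemma qseminorm_le a t : qseminorm a <= p (a + t *: e).
Proof. by apply: ge_inf; [exists 0; apply: lbound_shifts | exists t]. Qed.

Lemma qseminorm_adherent a eps : 0 < eps ->
  exists t, p (a + t *: e) < qseminorm a + eps.
Proof.
move=> eps0; have [] := inf_adherent eps0 (_ : has_inf [set p (a + t *: e) | t in [set: R]]).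
- by split; [exists (p (a + 0 *: e)), 0 | exists 0; apply: lbound_shifts].
- by move=> _ [t _ <-]; exists t.
Qed.

Lemma qseminorm_unit t : qseminorm (t *: e) = 0.
Proof.
apply/eqP; rewrite eq_le seminorm_ge0 ?andbT; last exact: qseminorm_seminorm.
by have := qseminorm_le (t *: e) (- t); rewrite scaleNr subrr seminorm0.
Qed.

Lemma qseminorm_lift (z : nat -> V) (d : nat -> R) : (forall n, 0 < d n) ->
  exists t : nat -> R, forall n,
    p (z n.+1 + t n.+1 *: e - (z n + t n *: e)) < qseminorm (z n.+1 - z n) + d n.
Proof.
move=> d0; have [s hs] := choice (fun n => qseminorm_adherent (z n.+1 - z n) (d0 n)).
exists (fun n => \sum_(k < n) s k) => n; rewrite big_ord_recr /= scalerDl.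
set T := (\sum_(k < n) s k) *: e.
suff -> : z n.+1 + (T + s n *: e) - (z n + T) = z n.+1 - z n + s n *: e by [].
by rewrite opprD addrACA [T + _ - T]addrAC subrr add0r.
Qed.

End QuotientSeminorm.

Section InfConvolution.
Context {R : realType} {V : lmodType R} (p1 p2 : V -> R).
Hypotheses (hp1 : seminorm p1) (hp2 : seminorm p2).

Definition inf_conv (x : V) : R := inf [set p1 y + p2 (x - y) | y in [set: V]].

Let lbound_splits x : lbound [set p1 y + p2 (x - y) | y in [set: V]] 0.
Proof. by move=> _ [y _ <-]; apply: addr_ge0; apply: seminorm_ge0. Qed.

Lemma inf_conv_seminorm : seminorm inf_conv.
Proof.
apply: inf_seminorm => [x|x|x x' _ _ [y _ <-] [y' _ <-]|k x _ [y _ <-]].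
- by exists (p1 0 + p2 (x - 0)), 0.
- exact: lbound_splits.
- exists (p1 (y + y') + p2 (x + x' - (y + y'))); first by exists (y + y').
  have -> : x + x' - (y + y') = (x - y) + (x' - y') by rewrite opprD addrACA.
  by rewrite [leRHS]addrACA; apply: lerD; apply: seminormD.
- exists (p1 (k *: y) + p2 (k *: x - k *: y)); first by exists (k *: y).
  by rewrite -scalerBr !seminormZ // mulrDr.
Qed.

Lemma inf_conv_le x y : inf_conv x <= p1 y + p2 (x - y).
Proof. by apply: ge_inf; [exists 0; apply: lbound_splits | exists y]. Qed.

Lemma inf_conv_le_l x : inf_conv x <= p1 x.
Proof. by have := inf_conv_le x x; rewrite subrr seminorm0 // addr0. Qed.

Lemma inf_conv_le_r x : inf_conv x <= p2 x.
Proof. by have := inf_conv_le x 0; rewrite seminorm0 // add0r subr0. Qed.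

End InfConvolution.

Section OrderUnitNorm.
Context {R : realType} {A : lmodType R} (le : A -> A -> Prop) (e : A).
Hypothesis Hou : is_order_unit_space le e.

Let ou_le_trans a b c : le a b -> le b c -> le a c.
Proof. by case: Hou => -[_ _ H _ _] _ _; apply: H. Qed.

Let ou_le_addr a b c : le a b -> le (a + c) (b + c).
Proof. by case: Hou => -[_ _ _ H _] _ _; apply: H. Qed.

Let ou_le_scale (t : R) a b : 0 <= t -> le a b -> le (t *: a) (t *: b).
Proof. by case: Hou => -[_ _ _ _ H] _ _; apply: H. Qed.

Let ou_le_opp a b : le a b -> le (- b) (- a).
Proof.
by move=> /(ou_le_addr (- a - b)); rewrite addrA subrr add0r addrCA subrr addr0.
Qed.

Let ou_le_add a b c d : le a b -> le c d -> le (a + c) (b + d).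
Proof.
move=> ab cd; apply: ou_le_trans (ou_le_addr c ab) _.
by rewrite ![b + _]addrC; apply: ou_le_addr.
Qed.

Let ou_set (a : A) := [set r : R | 0 <= r /\ le (- (r *: e)) a /\ le a (r *: e)].

(* Nothing forces [0 <= e]: e.g. [e = -1] is an order unit of [R]; the norm then vanishes. *)
Lemma ou_norm_degenerate : ~ le 0 e -> forall a, ou_norm le e a = 0.
Proof.
move=> e_not_pos a; have ou_set0 : ou_set a `<=` [set 0].
  move=> r [r0 [lo hi]]; apply/eqP; rewrite eq_le r0 andbT leNgt.
  apply/negP => rpos; apply: e_not_pos.
  have := ou_le_scale (_ : 0 <= (r + r)^-1) (ou_le_addr (r *: e) (ou_le_trans lo hi)).
  rewrite addNr scaler0 -scalerDl scalerA mulVf ?scale1r ?gt_eqF ?addr_gt0 //.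
  by apply; rewrite invr_ge0 ltW ?addr_gt0.
have [[r ar]|empty] := pselect (ou_set a !=set0).
  rewrite /ou_norm -/(ou_set a) (_ : ou_set a = [set 0]) ?inf1 //.
  by apply/seteqP; split => // _ ->; rewrite -(ou_set0 _ ar).
rewrite /ou_norm -/(ou_set a) (_ : ou_set a = set0) ?inf0 //.
by apply/seteqP; split => // r ar; apply: empty; exists r.
Qed.

Section PositiveUnit.
Hypothesis e_pos : le 0 e.

Let ou_le_unit (r s : R) : r <= s -> le (r *: e) (s *: e).
Proof.
move=> rs; have := ou_le_addr (r *: e) (ou_le_scale (_ : 0 <= s - r) e_pos).
by rewrite scaler0 add0r -scalerDl subrK; apply; rewrite subr_ge0.
Qed.

Let ou_set_nonempty a : ou_set a !=set0.
Proof.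
case: Hou => _ bounded _; have [r1 h1] := bounded a; have [r2 h2] := bounded (- a).
set r := Num.max 0 (Num.max r1 r2).
have [r0 r1r r2r] : [/\ 0 <= r, r1 <= r & r2 <= r] by rewrite !le_max !lexx !orbT.
exists r; split => //; split; last exact: ou_le_trans h1 (ou_le_unit r1r).
by have := ou_le_opp (ou_le_trans h2 (ou_le_unit r2r)); rewrite opprK.
Qed.

Let ou_setD a b r s : ou_set a r -> ou_set b s -> ou_set (a + b) (r + s).
Proof.
move=> [r0 [lo1 hi1]] [s0 [lo2 hi2]]; rewrite /ou_set /= scalerDl opprD.
by split; [exact: addr_ge0 | split; apply: ou_le_add].
Qed.

Let ou_setZ a r (k : R) : ou_set a r -> ou_set (k *: a) (`|k| * r).
Proof.
move=> [r0 [lo hi]]; split; first by rewrite mulr_ge0.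
have [k0|k0] := leP 0 k.
  by rewrite ger0_norm // -scalerA -scalerN; split; apply: ou_le_scale.
have nk : 0 <= - k by rewrite oppr_ge0 ltW.
have -> : k *: a = (- k) *: (- a) by rewrite scalerN scaleNr opprK.
rewrite ltr0_norm // -scalerA -scalerN; split; apply: ou_le_scale => //; first exact: ou_le_opp.
by rewrite -[r *: e]opprK; apply: ou_le_opp.
Qed.

Lemma ou_norm_seminorm_pos : seminorm (ou_norm le e).
Proof.
apply: inf_seminorm => [|a r []//|a b r s ar bs|k a r ar]; first exact: ou_set_nonempty.
- by exists (r + s); first exact: ou_setD.
- by exists (`|k| * r); first exact: ou_setZ.
Qed.

End PositiveUnit.

Lemma ou_norm_seminorm : seminorm (ou_norm le e).
Proof.
have [|e_not_pos] := pselect (le 0 e); first exact: ou_norm_seminorm_pos.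
by split=> [a b|k a]; rewrite !ou_norm_degenerate // ?addr0 ?mulr0.
Qed.

Lemma qnorm_seminorm : seminorm (qnorm le e).
Proof. exact: qseminorm_seminorm ou_norm_seminorm. Qed.

Lemma qnorm_le a t : qnorm le e a <= ou_norm le e (a + t *: e).
Proof. exact: (@qseminorm_le _ _ (ou_norm le e) e ou_norm_seminorm). Qed.

Lemma qnorm_adherent a eps : 0 < eps ->
  exists t, ou_norm le e (a + t *: e) < qnorm le e a + eps.
Proof. exact: (@qseminorm_adherent _ _ (ou_norm le e) e ou_norm_seminorm). Qed.

Lemma qnorm_unit t : qnorm le e (t *: e) = 0.
Proof. exact: (@qseminorm_unit _ _ (ou_norm le e) e ou_norm_seminorm). Qed.

End OrderUnitNorm.

Section HahnBanach.
Context {R : realType} {V : lmodType R} (p : V -> R).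
Hypothesis hp : seminorm p.
Variable a0 : V.

(* Partial linear functionals are encoded by their graphs. *)
Definition norming_graph (G : set (V * R)) :=
  [/\ (forall x u v, G (x, u) -> G (x, v) -> u = v),
      G (a0, p a0),
      (forall (k : R) x u y v, G (x, u) -> G (y, v) -> G (k *: x + y, k * u + v)) &
      (forall x u, G (x, u) -> u <= p x)].

Lemma norming_graph0 G : norming_graph G -> G (0, 0).
Proof.
by case=> _ Ga0 Glin _; have := Glin (-1) _ _ _ _ Ga0 Ga0; rewrite scaleN1r mulN1r !addNr.
Qed.

Lemma norming_graphZ G (k : R) x u : norming_graph G -> G (x, u) -> G (k *: x, k * u).
Proof.
move=> nG Gxu; case: (nG) => _ _ Glin _.
by have := Glin k _ _ _ _ Gxu (norming_graph0 nG); rewrite !addr0.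
Qed.

Lemma norming_graph_line : norming_graph [set (t *: a0, t * p a0) | t in [set: R]].
Proof.
split.
- move=> _ _ _ [t _ [<- <-]] [t' _ [ett' <-]].
  have [a00|a0_neq0] := eqVneq a0 0; first by rewrite a00 seminorm0 // !mulr0.
  move/eqP: ett'; rewrite -subr_eq0 -scalerBl scaler_eq0 (negbTE a0_neq0) orbF.
  by rewrite subr_eq0 => /eqP ->.
- by exists 1; rewrite ?scale1r ?mul1r.
- move=> k _ _ _ _ [t _ [<- <-]] [t' _ [<- <-]]; exists (k * t + t') => //.
  by rewrite scalerDl scalerA mulrDl mulrA.
- move=> _ _ [t _ [<- <-]]; rewrite seminormZ //.
  by rewrite ler_wpM2r ?seminorm_ge0 ?ler_norm.
Qed.

(* [Zorn_bigcup] also sees the union of the empty chain, which is [set0]. *)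
Let norming_or_empty G := G = set0 \/ norming_graph G.

Lemma norming_graph_bigcup (F : set (set (V * R))) :
  F `<=` norming_or_empty -> total_on F subset -> norming_or_empty (\bigcup_(G in F) G).
Proof.
move=> Fnorm Ftot.
have nonempty_norm G z : F G -> G z -> norming_graph G.
  by move=> FG Gz; case: (Fnorm G FG) => // G0; rewrite G0 in Gz.
have [[G0 [FG0 [z0 G0z0]]]|Fempty] := pselect (exists G, F G /\ G !=set0); last first.
  left; apply/seteqP; split => // z [G FG Gz].
  by apply: Fempty; exists G; split => //; exists z.
have common z z' : (\bigcup_(G in F) G) z -> (\bigcup_(G in F) G) z' ->
    exists G, [/\ F G, norming_graph G, G z & G z'].
  move=> [G1 F1 G1z] [G2 F2 G2z'].
  case: (Ftot _ _ F1 F2) => [G12|G21].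
    by exists G2; split => //; [exact: nonempty_norm G2z' | exact: G12].
  by exists G1; split => //; [exact: nonempty_norm G1z | exact: G21].
right; split.
- move=> x u v Gu Gv; have [G [_ [Gfun _ _ _] Gxu Gxv]] := common _ _ Gu Gv.
  exact: Gfun Gxu Gxv.
- by exists G0 => //; case: (nonempty_norm _ _ FG0 G0z0).
- move=> k x u y v Gu Gv; have [G [FG [_ _ Glin _] Gxu Gyv]] := common _ _ Gu Gv.
  by exists G => //; apply: Glin.
- move=> x u [G FG Gxu]; have [_ _ _ Gdom] := nonempty_norm _ _ FG Gxu.
  exact: Gdom.
Qed.

Section OneStepExtension.
Variables (M : set (V * R)) (x0 : V).
Hypotheses (nM : norming_graph M) (x0_out : ~ exists u, M (x0, u)).

Let rescale (s : R) y w : 0 < s -> p (y + s *: w) = s * p (s^-1 *: y + w).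
Proof.
move=> s0; rewrite -[in LHS](scale1r y) -(mulfV (lt0r_neq0 s0)) -scalerA -scalerDr.
by rewrite seminormZ // gtr0_norm.
Qed.

Lemma extension_constant : exists c,
  (forall x u, M (x, u) -> u - p (x - x0) <= c) /\
  (forall y v, M (y, v) -> c <= p (y + x0) - v).
Proof.
case: (nM) => _ Ma0 Mlin Mdom.
set S := [set z.2 - p (z.1 - x0) | z in M].
have S_ub y v : M (y, v) -> ubound S (p (y + x0) - v).
  move=> Myv _ [[x u] Mxu <-] /=.
  have := Mdom _ _ (Mlin 1 _ _ _ _ Mxu Myv); rewrite scale1r mul1r.
  have := seminormD hp (x - x0) (y + x0).
  rewrite (_ : x - x0 + (y + x0) = x + y); last by rewrite addrCA subrK addrC.
  lra.
have S0 : S !=set0 by exists (p a0 - p (a0 - x0)), (a0, p a0).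
have Ssup : has_sup S by split => //; exists (p (a0 + x0) - p a0); apply: S_ub.
exists (sup S); split => [x u Mxu|y v Myv]; last exact: ge_sup (S_ub _ _ Myv).
by apply: sup_upper_bound => //; exists (x, u).
Qed.

Definition graph_extension (c : R) : set (V * R) :=
  [set z | exists x u t, M (x, u) /\ z = (x + t *: x0, u + t * c)].

Section ExtensionConstant.
Variable c : R.
Hypothesis c_ge : forall x u, M (x, u) -> u - p (x - x0) <= c.
Hypothesis c_le : forall y v, M (y, v) -> c <= p (y + x0) - v.

Lemma graph_extension_dominated x u t : M (x, u) -> u + t * c <= p (x + t *: x0).
Proof.
case: (nM) => _ _ _ Mdom Mxu; have [t0|t_le0] := ltP 0 t.
  have := c_le (norming_graphZ t^-1 nM Mxu); rewrite rescale //.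
  by rewrite -(ler_pM2l t0) mulrBr mulrA mulfV ?gt_eqF // mul1r; lra.
have [->|t_neq0] := eqVneq t 0; first by rewrite scale0r mul0r !addr0; apply: Mdom.
have s0 : 0 < - t by rewrite oppr_gt0 lt_neqAle t_neq0.
have := c_ge (norming_graphZ (- t)^-1 nM Mxu).
rewrite -(ler_pM2l s0) mulrBr mulrA mulfV ?gt_eqF // mul1r.
by have := rescale x (- x0) s0; rewrite scalerN scaleNr opprK => ->; lra.
Qed.

Lemma graph_extension_functional x w w' :
  graph_extension c (x, w) -> graph_extension c (x, w') -> w = w'.
Proof.
case: (nM) => Mfun _ Mlin _.
move=> [x1 [u1 [t1 [M1 [E1 ->]]]]] [x2 [u2 [t2 [M2 [E2 ->]]]]].
have [et|net] := eqVneq t1 t2.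
  move: E2; rewrite -et E1 => /addIr ex; rewrite -ex in M2.
  by rewrite (Mfun _ _ _ M1 M2) et.
exfalso; apply: x0_out; exists ((t1 - t2)^-1 * (u2 - u1)).
have d0 : t1 - t2 != 0 by rewrite subr_eq0.
suff -> : x0 = (t1 - t2)^-1 *: (x2 - x1).
  apply: norming_graphZ => //; have := Mlin (-1) _ _ _ _ M1 M2.
  by rewrite scaleN1r mulN1r addrC [- u1 + _]addrC.
have : (t1 - t2) *: x0 = x2 - x1.
  have E : x1 + t1 *: x0 = x2 + t2 *: x0 by rewrite -E1 -E2.
  by rewrite scalerBl -[x2](addrK (t2 *: x0)) -E [RHS]addrAC [x1 + _]addrC addrK.
by move/(congr1 ( *:%R (t1 - t2)^-1)); rewrite scalerA mulVf // scale1r.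
Qed.

Lemma graph_extension_norming : norming_graph (graph_extension c).
Proof.
case: (nM) => _ Ma0 Mlin _; split.
- exact: graph_extension_functional.
- by exists a0, (p a0), 0; rewrite scale0r mul0r !addr0.
- move=> k _ _ _ _ [x1 [u1 [t1 [M1 [-> ->]]]]] [x2 [u2 [t2 [M2 [-> ->]]]]].
  exists (k *: x1 + x2), (k * u1 + u2), (k * t1 + t2); split; first exact: Mlin.
  by congr (_, _); rewrite (scalerDr, mulrDr) ?scalerDl ?mulrDl ?scalerA ?mulrA addrACA.
- by move=> _ _ [x [u [t [Mxu [-> ->]]]]]; apply: graph_extension_dominated.
Qed.

End ExtensionConstant.

Lemma norming_graph_extend : exists M', norming_graph M' /\ M `<` M'.
Proof.
have [c [c_ge c_le]] := extension_constant.
exists (graph_extension c); split; first exact: graph_extension_norming.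
split => [[x u] Mxu|/(_ (x0, c)) Mx0]; first by exists x, u, 0; rewrite scale0r mul0r !addr0.
apply: x0_out; exists c; apply: Mx0; exists 0, 0, 1.
by rewrite scale1r mul1r !add0r; split => //; apply: norming_graph0.
Qed.

End OneStepExtension.

Theorem hahn_banach : exists f : V -> R,
  [/\ (forall (k : R) x y, f (k *: x + y) = k * f x + f y),
      (forall x, `|f x| <= p x) & f a0 = p a0].
Proof.
have [M [nM Mmax]] := Zorn_bigcup norming_graph_bigcup.
have {nM} nM : norming_graph M.
  case: nM => // M0; exfalso; apply: (Mmax _ _ (or_intror norming_graph_line)).
  rewrite M0; split => // /(_ (a0, p a0)) [].
  by exists 1; rewrite ?scale1r ?mul1r.
have Mtotal x : exists u, M (x, u).
  apply: contrapT => x_out; have [M' [nM' MM']] := norming_graph_extend nM x_out.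
  exact: Mmax _ MM' (or_intror nM').
pose f x := xget 0 [set u | M (x, u)].
have Mf x : M (x, f x) by apply: (@xgetPex _ 0 [set u | M (x, u)]); apply: Mtotal.
case: (nM) => Mfun Ma0 Mlin Mdom.
have flin k x y : f (k *: x + y) = k * f x + f y.
  exact: Mfun (Mf _) (Mlin _ _ _ _ _ (Mf x) (Mf y)).
exists f; split => // [x|]; last exact: Mfun (Mf _) Ma0.
have f0 : f 0 = 0 by apply: Mfun (Mf _) (norming_graph0 nM).
have := flin (-1) x 0; rewrite scaleN1r addr0 f0 addr0 mulN1r => fN.
by rewrite ler_norml Mdom // andbT lerNl -fN -(seminormN hp x) Mdom.
Qed.

End HahnBanach.

Lemma exists_pow2_inv_lt {R : realType} (eps : R) : 0 < eps ->
  exists k, forall n, (k <= n)%N -> 2 ^- n < eps.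
Proof.
move=> eps0; have [k hk] := ltr_add_invr eps0; rewrite add0r in hk.
exists k => n kn; apply: le_lt_trans hk.
rewrite lef_pV2 ?posrE ?exprn_gt0 ?ltr0n // -natrX ler_nat.
exact: leq_ltn_trans kn (ltn_expl _ (ltnSn 1)).
Qed.

Section Compactness.
Context {R : realType} {A : lmodType R} (le : A -> A -> Prop) (e : A).
Hypothesis Hou : is_order_unit_space le e.
Local Notation qn := (qnorm le e).
Local Notation on := (ou_norm le e).

Definition qball (b : A) (r : R) : set A := [set y | qn (y - b) < r].

Lemma qball_open b r : q_open le e (qball b r).
Proof.
move=> y yb; exists (r - qn (y - b)); first by rewrite subr_gt0.
move=> z hz; apply: le_lt_trans (seminormB_tri (qnorm_seminorm Hou) z y b) _.
by rewrite -ltrBrDr.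
Qed.

Lemma qball_center b r : 0 < r -> qball b r b.
Proof. by rewrite /qball /= subrr seminorm0 //; apply: qnorm_seminorm. Qed.

Section FiniteSubcover.
Variable C : set (set A).

Definition finitely_covered (S : set A) := exists s : seq (set A),
  all (fun U => `[< C U >]) s /\ forall a, S a -> has (fun U => `[< U a >]) s.

Lemma finitely_covered_sub S T : S `<=` T -> finitely_covered T -> finitely_covered S.
Proof. by move=> ST [s [Cs Ts]]; exists s; split => // a /ST /Ts. Qed.

Lemma finitely_coveredU S T :
  finitely_covered S -> finitely_covered T -> finitely_covered (S `|` T).
Proof.
move=> [s [Cs Ss]] [t [Ct Tt]]; exists (s ++ t); rewrite all_cat Cs Ct.
by split => // a [/Ss|/Tt]; rewrite has_cat => ->; rewrite ?orbT.
Qed.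

Lemma finitely_covered_nonempty S : ~ finitely_covered S -> S !=set0.
Proof.
move=> nS; apply: contrapT => S0; apply: nS; exists [::]; split => // a Sa.
by case: S0; exists a.
Qed.

End FiniteSubcover.

Lemma q_compactP K :
  (forall C, (forall U, C U -> q_open le e U) -> (forall a, K a -> exists2 U, C U & U a) ->
    finitely_covered C K) -> q_compact le e K.
Proof.
move=> Kcov C Copen CK; have [s [Cs Ks]] := Kcov C Copen CK.
exists (size s), (fun i => nth set0 s i); split => [i|a /Ks /(has_nthP set0)[i si]].
  by move/all_nthP: Cs => /(_ set0 i (ltn_ord i)) /asboolP.
by move=> /asboolP Ua; exists (Ordinal si).
Qed.

Section CompleteTotallyBounded.
Variable K : set A.
Hypothesis K_shift : forall a t, K a -> K (a + t *: e).
Hypothesis K_tb : q_totally_bounded le e K.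
Hypothesis K_complete : forall u : nat -> A, (forall n, K (u n)) ->
  (forall eps : R, 0 < eps -> exists N, forall m n, (N <= m)%N -> (N <= n)%N ->
      on (u m - u n) < eps) ->
  exists2 a, K a & (forall eps : R, 0 < eps -> exists N, forall n, (N <= n)%N ->
      on (u n - a) < eps).

Section Cover.
Variable C : set (set A).
Hypothesis C_open : forall U, C U -> q_open le e U.
Hypothesis C_cover : forall a, K a -> exists2 U, C U & U a.
Local Notation covered := (finitely_covered C).

Lemma uncovered_ball S r : 0 < r -> S `<=` K -> ~ covered S ->
  exists b, ~ covered (S `&` qball b r).
Proof.
move=> r0 SK nS; have [s Ks] := K_tb r0.
apply/not_existsP => /= all_covered; apply: nS.
suff : covered (S `&` [set a | exists2 b, b \in s & qn (a - b) < r]).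
  by apply: finitely_covered_sub => a Sa; split => //; apply: Ks (SK _ Sa).
elim: s {Ks} => [|b s IH]; first by exists [::]; split => // a [_ []].
apply: (finitely_covered_sub (T := (S `&` qball b r) `|`
    (S `&` [set a | exists2 b, b \in s & qn (a - b) < r]))).
  move=> a [Sa [b']]; rewrite in_cons => /orP[/eqP -> ab|b's ab']; first by left.
  by right; split => //; exists b'.
by apply: finitely_coveredU => //; apply: contrapT.
Qed.

Section Uncovered.
Hypothesis K_uncovered : ~ covered K.

Let center (S : set A) (n : nat) : A :=
  xget 0 [set b | ~ covered (S `&` qball b (2 ^- n))].

Fixpoint uncovered_seq (n : nat) : set A :=
  if n is m.+1 then uncovered_seq m `&` qball (center (uncovered_seq m) m) (2 ^- m)
  else K.

Let pow2_gt0 n : 0 < 2 ^- n :> R.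
Proof. by rewrite invr_gt0 exprn_gt0. Qed.

Lemma uncovered_seqP n : ~ covered (uncovered_seq n) /\ uncovered_seq n `<=` K.
Proof.
elim: n => [|n [IH1 IH2]] /=; first by split.
split; last by move=> a [/IH2].
apply: (@xgetPex _ 0 [set b | ~ covered (uncovered_seq n `&` qball b (2 ^- n))]).
exact: uncovered_ball.
Qed.

Let z n := xget 0 (uncovered_seq n.+1).

Let z_in n : uncovered_seq n.+1 (z n).
Proof. by apply: xgetPex; apply: finitely_covered_nonempty (uncovered_seqP n.+1).1. Qed.

Let z_step n : qn (z n.+1 - z n) < 2 * 2 ^- n.
Proof.
have [[_ h1] _] := z_in n.+1; have [_ h2] := z_in n.
apply: le_lt_trans (seminormB_tri (qnorm_seminorm Hou) _ (center (uncovered_seq n) n) _) _.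
rewrite (seminormBC (qnorm_seminorm Hou) (center _ _)); move: h1 h2; rewrite /qball /=; lra.
Qed.

Let z_lift_converges : exists (t : nat -> R) a, K a /\ forall eps : R, 0 < eps ->
  exists N, forall n, (N <= n)%N -> on (z n + t n *: e - a) < eps.
Proof.
have hon := ou_norm_seminorm Hou.
have [t ht] := qseminorm_lift e hon z pow2_gt0; exists t.
pose y n := z n + t n *: e.
have yK n : K (y n) by apply/K_shift/(uncovered_seqP n.+1).2/z_in.
have y_step n : on (y n.+1 - y n) <= 3 * 2 ^- n by have := ht n; have := z_step n; lra.
have y_near := seminorm_geometric hon y_step.
have y_cauchy eps : 0 < eps -> exists N, forall m n, (N <= m)%N -> (N <= n)%N ->
    on (y m - y n) < eps.
  move=> eps0; have [N hN] := exists_pow2_inv_lt (divr_gt0 eps0 (ltr0Sn _ 11)).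
  exists N => m n Nm Nn; apply: le_lt_trans (seminormB_tri hon _ (y N) _) _.
  rewrite (seminormBC hon (y N)); have := hN N (leqnn N).
  by move: (y_near _ _ Nm) (y_near _ _ Nn); lra.
by have [a Ka ya] := K_complete yK y_cauchy; exists a.
Qed.

(* Near the limit of the lifted [z n], a single member of [C] contains a whole
   [uncovered_seq n]. *)
Lemma uncovered_absurd : False.
Proof.
have hqn := qnorm_seminorm Hou; have [t [a [Ka za]]] := z_lift_converges.
have [U CU Ua] := C_cover Ka; have [eps eps0 Uball] := C_open CU Ua.
have eps4 : 0 < eps / 4 by rewrite divr_gt0.
have [[N1 hN1] [k hk]] := (za _ eps4, exists_pow2_inv_lt eps4).
pose n := maxn N1 k; have [_ z_near] := z_in n.
have zna : qn (z n - a) < eps / 4.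
  apply: le_lt_trans (hN1 n (leq_maxl _ _)).
  by have := qnorm_le Hou (z n - a) (t n); rewrite addrAC.
apply: (uncovered_seqP n.+1).1; exists [:: U]; rewrite /= andbT; split.
  exact/asboolP.
move=> w [_ w_near]; rewrite orbF; apply/asboolP/Uball.
apply: le_lt_trans (seminormB_tri hqn _ (z n) _) _.
apply: le_lt_trans (lerD (seminormB_tri hqn _ (center (uncovered_seq n) n) _) (lexx _)) _.
rewrite (seminormBC hqn _ (z n)); have := hk n (leq_maxr _ _).
by move: w_near z_near zna; rewrite /qball /=; lra.
Qed.

End Uncovered.
End Cover.

Theorem q_compact_complete_totally_bounded : q_compact le e K.
Proof.
apply: q_compactP => C Copen Ccover; apply: contrapT.
exact: uncovered_absurd.
Qed.

End CompleteTotallyBounded.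

Section Continuity.
Variable K : set A.

Definition q_continuous_on (g : A -> R) :=
  forall a, K a -> forall eps : R, 0 < eps -> exists2 d : R, 0 < d &
    forall b, K b -> qn (b - a) < d -> `|g b - g a| < eps.

Lemma q_continuous_cst (c : R) : q_continuous_on (fun _ => c).
Proof. by move=> a Ka eps eps0; exists 1 => // b _ _; rewrite subrr normr0. Qed.

Lemma q_continuousD f g :
  q_continuous_on f -> q_continuous_on g -> q_continuous_on (fun x => f x + g x).
Proof.
move=> cf cg a Ka eps eps0; have eps2 : 0 < eps / 2 by rewrite divr_gt0.
have [[d1 d10 h1] [d2 d20 h2]] := (cf a Ka _ eps2, cg a Ka _ eps2).
exists (Num.min d1 d2); first by rewrite lt_min d10 d20.
move=> b Kb; rewrite lt_min => /andP[bd1 bd2]; rewrite opprD addrACA.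
by apply: le_lt_trans (ler_normD _ _) _; move: (h1 b Kb bd1) (h2 b Kb bd2); lra.
Qed.

Lemma q_continuousMl (c : R) g : q_continuous_on g -> q_continuous_on (fun x => c * g x).
Proof.
move=> cg a Ka eps eps0; have c1 : 0 < `|c| + 1 by rewrite ltr_wpDl.
have [d d0 hd] := cg a Ka _ (divr_gt0 eps0 c1).
exists d => // b Kb ba; rewrite -mulrBr normrM.
have := hd b Kb ba; rewrite ltr_pdivlMr // => h; apply: le_lt_trans h.
by rewrite mulrC ler_wpM2l // lerDl.
Qed.

Lemma q_continuous_sqr g : q_continuous_on g -> q_continuous_on (fun x => g x ^+ 2).
Proof.
move=> cg a Ka eps eps0; set w := `|g a|.
have w1 : 0 < 1 + 2 * w by have := normr_ge0 (g a); rewrite -/w; lra.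
have m0 : 0 < Num.min 1 (eps / (1 + 2 * w)) by rewrite lt_min ltr01 divr_gt0.
have [d d0 hd] := cg a Ka _ m0.
exists d => // b Kb ba; have := hd b Kb ba; rewrite lt_min => /andP[gb1 gbe].
have -> : g b ^+ 2 - g a ^+ 2 = (g b - g a) * (g b - g a + 2 * g a) by ring.
rewrite normrM; apply: le_lt_trans (_ : _ <= `|g b - g a| * (1 + 2 * w)) _.
  rewrite ler_wpM2l // (le_trans (ler_normD _ _)) // normrM ger0_norm //.
  by rewrite lerD2r ltW.
by rewrite -ltr_pdivlMr.
Qed.

Lemma q_continuous_sum (I : Type) (s : seq I) (F : I -> A -> R) :
  (forall i, q_continuous_on (F i)) -> q_continuous_on (fun x => \sum_(i <- s) F i x).
Proof.
move=> cF; elim: s => [|i s IH].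
  by under eq_fun do rewrite big_nil; apply: q_continuous_cst.
by under eq_fun do rewrite big_cons; apply: q_continuousD.
Qed.

(* Every point of [K] is beaten by another one on a ball around it; a finite
   subcover leaves the best of finitely many witnesses unbeaten. *)
Lemma q_compact_argmin g : q_compact le e K -> K !=set0 -> q_continuous_on g ->
  exists2 x, K x & forall y, K y -> g x <= g y.
Proof.
move=> Kc [x0 Kx0] cg; apply: contrapT => no_min.
have lower a : K a -> exists2 x, K x & g x < g a.
  move=> Ka; apply: contrapT => no_lower; apply: no_min; exists a => // y Ky.
  by rewrite leNgt; apply/negP => gya; apply: no_lower; exists y.
pose C := [set U : set A | exists b x d, [/\ K x, 0 < d, U = qball b d &
   forall y, K y -> qn (y - b) < d -> g x < g y]].
have [||n [U [CU KU]]] := Kc C.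
- by move=> _ [b [x [d [_ _ -> _]]]]; apply: qball_open.
- move=> a Ka; have [x Kx gxa] := lower a Ka.
  have gap : 0 < g a - g x by rewrite subr_gt0.
  have [d d0 hd] := cg a Ka _ gap.
  exists (qball a d); last exact: qball_center.
  exists a, x, d; split => // y Ky ya.
  by have := hd y Ky ya; rewrite ltr_norml => /andP[+ _]; lra.
have xP i : exists x, K x /\ forall y, K y -> U i y -> g x < g y.
  by have [b [x [d [Kx _ -> gx]]]] := CU i; exists x.
have [xs xsP] := choice xP.
have [i0 _] := KU x0 Kx0.
have [j _ jmin] := @arg_minP _ _ _ i0 predT (fun i => g (xs i)) isT.
have [i Uxj] := KU _ (xsP j).1.
by have := (xsP i).2 _ (xsP j).1 Uxj; rewrite ltNge jmin.
Qed.

Lemma q_compact_bounded g : q_compact le e K -> K !=set0 -> q_continuous_on g ->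
  exists B, forall x, K x -> `|g x| <= B.
Proof.
move=> Kc K0 cg; have [|x _ xmax] := q_compact_argmin (g := fun x => - `|g x|) Kc K0.
  move=> a Ka eps eps0; have [d d0 hd] := cg a Ka eps eps0; exists d => // b Kb ba.
  rewrite opprK addrC distrC; apply: le_lt_trans (hd b Kb ba); apply: ler_dist_dist.
by exists `|g x| => y /xmax; rewrite lerN2.
Qed.

Lemma q_compact_separation (P : (A -> R) -> Prop) (psi : (A -> R) -> R) :
  q_compact le e K -> (forall f, P f -> q_continuous_on f) ->
  (forall x, K x -> exists2 f, P f & f x != psi f) ->
  exists n (fs : 'I_n -> A -> R),
    (forall i, P (fs i)) /\ forall x, K x -> exists i, fs i x != psi (fs i).
Proof.
move=> Kc Pcont sep.
pose C := [set U : set A | exists f b d,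
  [/\ P f, U = qball b d & forall y, K y -> U y -> f y != psi f]].
have [||n [U [CU KU]]] := Kc C.
- by move=> _ [f [b [d [_ -> _]]]]; apply: qball_open.
- move=> a Ka; have [f Pf fa] := sep a Ka.
  have gap : 0 < `|f a - psi f| by rewrite normr_gt0 subr_eq0.
  have [d d0 hd] := Pcont f Pf a Ka _ gap.
  exists (qball a d); last exact: qball_center.
  exists f, a, d; split => // y Ky ay; apply/eqP => fy.
  by have := hd y Ky ay; rewrite fy distrC ltxx.
have fP i : exists f, P f /\ forall y, K y -> U i y -> f y != psi f.
  by have [f [b [d [Pf Ui fU]]]] := CU i; exists f.
have [fs fsP] := choice fP.
exists n, fs; split => [i|x Kx]; first by have [] := fsP i.
by have [i Uix] := KU x Kx; exists i; apply: (fsP i).2.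
Qed.

End Continuity.

End Compactness.

Section AffineExtension.
Context {R : realType} {V : lmodType R} (L : V -> R) (f : V -> R).
Hypothesis hL : seminorm L.
Hypothesis f0 : f 0 = 0.
Hypothesis f_affine : forall a b (t : R), L a <= 1 -> L b <= 1 -> 0 <= t <= 1 ->
  f (t *: a + (1 - t) *: b) = t * f a + (1 - t) * f b.

Lemma affine_ballZ x (s : R) : L x <= 1 -> 0 <= s <= 1 -> f (s *: x) = s * f x.
Proof.
move=> Lx s01; have := f_affine Lx (unit_ball0 hL) s01.
by rewrite scaler0 addr0 f0 mulr0 addr0.
Qed.

Lemma affine_ballN x : L x <= 1 -> f (- x) = - f x.
Proof.
move=> Lx; have half : 0 <= (2^-1 : R) <= 1 by apply/andP; split; lra.
have := f_affine Lx (unit_ballN hL Lx) half.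
have -> : 1 - 2^-1 = 2^-1 :> R by lra.
by rewrite scalerN subrr f0 -mulrDr => /esym/eqP; rewrite mulf_eq0 addr_eq0; lra.
Qed.

Lemma ext_radius a (r : R) : 0 < r -> L a <= r -> ext L f a = r * f (r^-1 *: a).
Proof.
have radius_le r1 r2 : 0 < r1 -> r1 <= r2 -> L a <= r1 ->
    r1 * f (r1^-1 *: a) = r2 * f (r2^-1 *: a).
  move=> r10 r12 ar1; have r20 := lt_le_trans r10 r12.
  have -> : r2^-1 *: a = (r1 / r2) *: (r1^-1 *: a).
    by rewrite scalerA mulrAC divff ?gt_eqF // mul1r.
  have s01 : 0 <= r1 / r2 <= 1.
    by apply/andP; split; [apply: divr_ge0; apply: ltW | rewrite ler_pdivrMr // mul1r].
  rewrite [f ((r1 / r2) *: _)]affine_ballZ ?(unit_ball_scale hL) //.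
  by rewrite mulrA mulrCA divff ?gt_eqF // mulr1.
move=> r0 ar; have a1 : 0 < L a + 1 by rewrite ltr_pwDr ?seminorm_ge0.
rewrite /ext; have [r_le|r_gt] := leP r (L a + 1).
  by rewrite (radius_le r (L a + 1)).
by rewrite (radius_le (L a + 1) r) ?lerDl // ltW.
Qed.

Lemma ext_le1 x : L x <= 1 -> ext L f x = f x.
Proof. by move=> Lx; rewrite (@ext_radius x 1) // invr1 scale1r mul1r. Qed.

Lemma extD a b : ext L f (a + b) = ext L f a + ext L f b.
Proof.
set ra := L a + 1; set rb := L b + 1.
have [ra0 rb0] : 0 < ra /\ 0 < rb by split; rewrite ltr_pwDr ?seminorm_ge0.
have r0 : 0 < ra + rb by rewrite addr_gt0.
have [La Lb] : L a <= ra /\ L b <= rb by split; rewrite lerDl.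
rewrite (@ext_radius (a + b) (ra + rb)) //; last first.
  by apply: le_trans (seminormD hL a b) _; apply: lerD.
rewrite (ext_radius ra0 La) (ext_radius rb0 Lb).
have -> : (ra + rb)^-1 *: (a + b) =
    (ra / (ra + rb)) *: (ra^-1 *: a) + (1 - ra / (ra + rb)) *: (rb^-1 *: b).
  by rewrite !scalerA scalerDr; congr (_ *: _ + _ *: _); field;
    rewrite !gt_eqF.
have t01 : 0 <= ra / (ra + rb) <= 1.
  by apply/andP; split; [apply: divr_ge0; apply: ltW | rewrite ler_pdivrMr // mul1r lerDl ltW].
by rewrite f_affine ?(unit_ball_scale hL) //; field; rewrite gt_eqF.
Qed.

Lemma extN a : ext L f (- a) = - ext L f a.
Proof.
have r0 : 0 < L a + 1 by rewrite ltr_pwDr ?seminorm_ge0.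
have [La Ln] : L a <= L a + 1 /\ L (- a) <= L a + 1 by rewrite seminormN // lerDl.
rewrite (ext_radius r0 Ln) (ext_radius r0 La) scalerN affine_ballN ?mulrN //.
exact: (unit_ball_scale hL).
Qed.

Lemma extZ (k : R) a : ext L f (k *: a) = k * ext L f a.
Proof.
wlog k0 : k a / 0 <= k.
  move=> ext_pos; have [|k_lt0] := leP 0 k; first exact: ext_pos.
  by rewrite -[k]opprK scaleNr extN ext_pos ?mulNr // oppr_ge0 ltW.
have [->|k_neq0] := eqVneq k 0; first by rewrite scale0r mul0r ext_le1 ?f0 ?seminorm0.
have {k0 k_neq0} k0 : 0 < k by rewrite lt_neqAle eq_sym k_neq0.
have r0 : 0 < L a + 1 by rewrite ltr_pwDr ?seminorm_ge0.
rewrite (@ext_radius a (L a + 1)) ?lerDl // (@ext_radius _ (k * (L a + 1))) ?mulr_gt0 //.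
  by rewrite scalerA invfM [_^-1 / _ * _]mulrAC mulVf ?gt_eqF // mul1r mulrA.
by rewrite seminormZ // gtr0_norm // ler_pM2l // lerDl.
Qed.

Lemma ext_linear (k : R) a b : ext L f (k *: a + b) = k * ext L f a + ext L f b.
Proof. by rewrite extD extZ. Qed.

Lemma ext_bound a (r B : R) : 0 < r -> L a <= r -> (forall x, L x <= 1 -> `|f x| <= B) ->
  `|ext L f a| <= r * B.
Proof.
move=> r0 ar fB; rewrite (ext_radius r0 ar) normrM gtr0_norm //.
by rewrite ler_pM2l // fB // (unit_ball_scale hL).
Qed.

Lemma ext_of_linear g : (forall (k : R) x y, g (k *: x + y) = k * g x + g y) ->
  forall a, ext L g a = g a.
Proof.
move=> glin a; have g0 : g 0 = 0 by have := glin 1 0 0; rewrite addr0 mul1r scale1r; lra.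
have gZ (k : R) x : g (k *: x) = k * g x by rewrite -[k *: x]addr0 glin g0 addr0.
by rewrite /ext gZ mulrA mulfV ?mul1r // gt_eqF // ltr_pwDr ?seminorm_ge0.
Qed.

End AffineExtension.

Section SupNorm.
Context {R : realType} {V : lmodType R} (L : V -> R).
Hypothesis hL : seminorm L.

Lemma supnorm_le (f : V -> R) (B : R) :
  (forall x, L x <= 1 -> `|f x| <= B) -> supnorm L f <= B.
Proof.
move=> fB; apply: ge_sup; first by exists `|f 0|, 0; first exact: unit_ball0.
by move=> _ [x Lx <-]; apply: fB.
Qed.

Lemma supnorm_ge (f : V -> R) x : (exists B, forall y, L y <= 1 -> `|f y| <= B) ->
  L x <= 1 -> `|f x| <= supnorm L f.
Proof.
move=> [B fB] Lx; apply: sup_upper_bound; last by exists x.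
split; first by exists `|f x|, x.
by exists B => _ [y Ly <-]; apply: fB.
Qed.

End SupNorm.

Section LipNorm.
Context {R : realType} {A : lmodType R} (le : A -> A -> Prop) (e : A) (L : A -> R).
Hypothesis Hou : is_order_unit_space le e.
Hypothesis Hlip : lip_norm le e L.
Local Notation qn := (qnorm le e).

Lemma lip_seminorm : seminorm L.
Proof. by case: Hlip. Qed.

Lemma lip_unit (t : R) : L (t *: e) = 0.
Proof. by case: Hlip => _ unit0 _ _; apply/unit0; exists t. Qed.

Lemma lip_shift a (t : R) : L (a + t *: e) = L a.
Proof.
have hL := lip_seminorm; apply/eqP; rewrite eq_le.
have := seminormD hL a (t *: e); have := seminormD hL (a + t *: e) ((- t) *: e).
by rewrite -addrA -scalerDl subrr scale0r addr0 !lip_unit !addr0 => -> ->.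
Qed.

Lemma lip_lsc_qnorm a :
  (forall eps : R, 0 < eps -> exists b, L b <= 1 /\ qn (a - b) < eps) -> L a <= 1.
Proof.
move=> approx; case: Hlip => _ _ lsc _; apply: lsc => eps eps0.
have eps2 : 0 < eps / 2 by rewrite divr_gt0.
have [b [Lb ab]] := approx _ eps2; have [t abt] := qnorm_adherent Hou (a - b) eps2.
exists (b - t *: e); rewrite -scaleNr lip_shift; split => //.
by rewrite scaleNr opprB addrA addrAC; lra.
Qed.

Lemma unit_ball_q_compact : closed_seminorm le e L -> q_compact le e (unit_ball L).
Proof.
move=> Hcl; apply: q_compact_complete_totally_bounded => //; last by case: Hlip.
by move=> a t; rewrite /unit_ball /= lip_shift.
Qed.

End LipNorm.

Section Duality.
Context {R : realType} {A : lmodType R} (le : A -> A -> Prop) (e : A) (L : A -> R).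
Hypothesis Hou : is_order_unit_space le e.
Hypothesis Hlip : lip_norm le e L.
Hypothesis Hcl : closed_seminorm le e L.
Local Notation qn := (qnorm le e).
Local Notation Af0 := (Af0 le e L).

Let hL := lip_seminorm Hlip.

Lemma Af0_bounded f : Af0 f -> exists B, forall x, L x <= 1 -> `|f x| <= B.
Proof.
case=> _ fcont _; apply: (q_compact_bounded Hou _ _ fcont).
  exact: unit_ball_q_compact Hou Hlip Hcl.
by exists 0; apply: unit_ball0.
Qed.

Lemma Af0_le_supnorm f x : Af0 f -> L x <= 1 -> `|f x| <= supnorm L f.
Proof. by move=> /Af0_bounded; apply: supnorm_ge. Qed.

Lemma Af0_shift f x (t : R) : Af0 f -> L x <= 1 -> f (x + t *: e) = f x.
Proof.
case=> _ fcont _ Lx; apply/eqP; rewrite -subr_eq0 -normr_le0.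
apply/ler_addgt0Pr => eps eps0; rewrite add0r.
have [d d0 hd] := fcont x Lx eps eps0; apply/ltW/hd.
  by rewrite /unit_ball /= (lip_shift Hlip).
by rewrite addrC addKr qnorm_unit.
Qed.

Lemma ext_shift f a (t : R) : Af0 f -> ext L f (a + t *: e) = ext L f a.
Proof.
move=> Hf; case: (Hf) => f0 _ faff.
rewrite (extD hL f0 faff) [ext L f (t *: e)](ext_le1 hL f0 faff); last by rewrite (lip_unit Hlip).
by rewrite -[t *: e]add0r Af0_shift ?f0 ?addr0 ?seminorm0.
Qed.

Lemma Af0_zero : Af0 (fun _ => 0).
Proof.
split=> //; first exact: q_continuous_cst.
by move=> *; rewrite !mulr0 addr0.
Qed.

Lemma Af0_lin (k : R) f g : Af0 f -> Af0 g -> Af0 (fun x => k * f x + g x).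
Proof.
move=> [f0 fcont faff] [g0 gcont gaff]; split.
- by rewrite f0 g0 mulr0 addr0.
- exact: q_continuousD (q_continuousMl k fcont) gcont.
- by move=> a b t La Lb t01; rewrite faff // gaff //; ring.
Qed.

Lemma Af0_sum (I : Type) (s : seq I) (F : I -> A -> R) (lam : I -> R) :
  (forall i, Af0 (F i)) -> Af0 (fun x => \sum_(i <- s) lam i * F i x).
Proof.
move=> AF; elim: s => [|i s IH].
  by under eq_fun do rewrite big_nil; apply: Af0_zero.
by under eq_fun do rewrite big_cons; apply: Af0_lin.
Qed.

Lemma Af0_of_linear (f : A -> R) (M : R) :
  (forall (k : R) x y, f (k *: x + y) = k * f x + f y) -> 0 < M ->
  (forall x, `|f x| <= M * qn x) -> Af0 f.
Proof.
move=> flin M0 fM; have f0 : f 0 = 0 by have := flin 1 0 0; rewrite addr0 mul1r scale1r; lra.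
have fZ (k : R) x : f (k *: x) = k * f x by rewrite -[k *: x]addr0 flin f0 addr0.
have fB x y : f (x - y) = f x - f y.
  by have := flin (-1) y x; rewrite scaleN1r mulN1r addrC [- f y + _]addrC.
split => // [x _ eps eps0|x y t _ _ _]; last by rewrite flin !fZ.
exists (eps / M) => [|y _]; first by rewrite divr_gt0.
by rewrite -fB ltr_pdivlMr // mulrC => /(le_lt_trans (fM _)).
Qed.

Lemma sigma_dual a : is_dual_elem le e L (sigma L a).
Proof.
have r0 : 0 < L a + 1 by rewrite ltr_pwDr ?seminorm_ge0.
split=> [f g _ _ fg|f g k _ _|]; first by rewrite /sigma /ext fg ?unit_ball_scale ?lerDl.
  by rewrite /sigma /ext mulrDr mulrCA.
exists (L a + 1) => f Hf; case: (Hf) => f0 _ faff.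
by apply: (ext_bound hL f0 faff r0); [rewrite lerDl | move=> x; apply: Af0_le_supnorm].
Qed.

Lemma Af0_zero_supnorm_le1 : Af0 (fun _ => 0) /\ supnorm L (fun _ : A => 0) <= 1.
Proof. by split; [exact: Af0_zero | apply: supnorm_le => // x _; rewrite normr0]. Qed.

Lemma dual_norm_le phi (B : R) :
  (forall f, Af0 f -> supnorm L f <= 1 -> `|phi f| <= B) -> dual_norm le e L phi <= B.
Proof.
move=> phiB; apply: ge_sup.
  by exists `|phi (fun _ => 0)|, (fun _ => 0); first exact: Af0_zero_supnorm_le1.
by move=> _ [f [Af f1] <-]; apply: phiB.
Qed.

Lemma dual_norm_ge phi f (B : R) :
  (forall g, Af0 g -> supnorm L g <= 1 -> `|phi g| <= B) ->
  Af0 f -> supnorm L f <= 1 -> `|phi f| <= dual_norm le e L phi.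
Proof.
move=> phiB Af f1; apply: sup_upper_bound; last by exists f.
split; first by exists `|phi f|, f.
by exists B => _ [g [Ag g1] <-]; apply: phiB.
Qed.

Lemma normr_sigma_le f a : Af0 f -> supnorm L f <= 1 -> `|sigma L a f| <= L a.
Proof.
move=> Af f1; case: (Af) => f0 _ faff; apply/ler_addgt0Pr => d d0.
have r0 : 0 < L a + d by rewrite ltr_pwDr ?seminorm_ge0.
have ad : L a <= L a + d by rewrite lerDl ltW.
apply: le_trans (ext_bound hL f0 faff r0 ad (fun x => Af0_le_supnorm Af)) _.
by rewrite ler_piMr // ltW.
Qed.

(* Lower semicontinuity makes [L] the supremum of its inf-convolutions with
   the multiples of the quotient norm. *)
Lemma lip_le_of_inf_conv a (l : R) : 0 < l ->
  (forall M, 0 < M -> inf_conv L (fun x => M * qn x) a < l) -> L a <= l.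
Proof.
move=> l0 conv_lt; suff : L (l^-1 *: a) <= 1.
  by rewrite seminormZ // ger0_norm ?invr_ge0 ?(ltW l0) // mulrC ler_pdivrMr // mul1r.
apply: (lip_lsc_qnorm Hou Hlip) => eps eps0.
have M0 : 0 < 2 / eps by rewrite divr_gt0.
have [_ [y _ <-]] := inf_lt (ex_intro _ _ (ex_intro2 _ _ 0 I erefl)) (conv_lt _ M0).
have Meps : 2 / eps * eps = 2 by rewrite divfK ?gt_eqF.
have [Ly0 q0] := (seminorm_ge0 hL y, seminorm_ge0 (qnorm_seminorm Hou) (a - y)).
move=> hy; exists (l^-1 *: y); split; first by apply: unit_ball_scale => //; nra.
rewrite -scalerBr (seminormZ (qnorm_seminorm Hou)) ger0_norm ?invr_ge0 ?(ltW l0) //.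
by rewrite mulrC ltr_pdivrMr //; move: (2 / eps) M0 Meps hy => m; nra.
Qed.

Lemma sigma_norming a (eta : R) : 0 < eta ->
  exists2 f, Af0 f /\ supnorm L f <= 1 & L a - eta <= `|sigma L a f|.
Proof.
move=> eta0; set l := L a - eta; have [l_le0|l0] := leP l 0.
  by exists (fun _ => 0); [exact: Af0_zero_supnorm_le1 | apply: le_trans l_le0 _].
have [M [M0 lM]] : exists M, 0 < M /\ l <= inf_conv L (fun x => M * qn x) a.
  apply: contrapT => no_M; suff : L a <= l by rewrite /l; lra.
  apply: lip_le_of_inf_conv => // M M0; rewrite ltNge; apply/negP => lM.
  by apply: no_M; exists M.
have hqM := seminormMl (qnorm_seminorm Hou) (ltW M0).
have [f [flin fle fa]] := hahn_banach (inf_conv_seminorm hL hqM) a.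
exists f; last by rewrite /sigma ext_of_linear // fa (le_trans lM) ?ler_norm.
split; first by apply: (Af0_of_linear flin M0) => x; apply: le_trans (fle x) (inf_conv_le_r _ _ _).
by apply: supnorm_le => // x Lx; apply: le_trans (fle x) (le_trans (inf_conv_le_l _ _ _) Lx).
Qed.

Lemma dual_norm_sigma a : dual_norm le e L (sigma L a) = L a.
Proof.
apply/eqP; rewrite eq_le dual_norm_le /=; last by move=> f; apply: normr_sigma_le.
apply/ler_addgt0Pr => eta eta0; have [f [Af f1] fa] := sigma_norming a eta0.
by have := dual_norm_ge (fun g => @normr_sigma_le g a) Af f1; lra.
Qed.

Section Surjectivity.
Variable phi : (A -> R) -> R.
Hypothesis Hphi : is_dual_elem le e L phi.

Lemma dual_elem_sum (I : Type) (s : seq I) (F : I -> A -> R) (lam : I -> R) :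
  (forall i, Af0 (F i)) ->
  phi (fun x => \sum_(i <- s) lam i * F i x) = \sum_(i <- s) lam i * phi (F i).
Proof.
case: Hphi => _ phi_lin _ AF; elim: s => [|i s IH].
  under eq_fun do rewrite big_nil; rewrite big_nil.
  have := phi_lin _ _ 1 Af0_zero Af0_zero.
  by under eq_fun do rewrite mulr0 addr0; rewrite mul1r; lra.
under eq_fun do rewrite big_cons; rewrite big_cons -IH.
by rewrite phi_lin //; apply: Af0_sum.
Qed.

Lemma dual_elem_bound : exists2 c : R, 0 < c &
  forall f, Af0 f -> `|phi f| <= c * supnorm L f.
Proof.
case: Hphi => _ _ [C phiC]; exists (Num.max C 1) => [|f Af].
  by rewrite lt_max ltr01 orbT.
apply: le_trans (phiC f Af) (ler_wpM2r _ _); last by rewrite le_max lexx.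
by apply: le_trans (Af0_le_supnorm Af (unit_ball0 hL)).
Qed.

Section Evaluation.
Variable c : R.
Hypothesis c0 : 0 < c.
Hypothesis phic : forall f, Af0 f -> `|phi f| <= c * supnorm L f.
Let psi f := phi f / c.

(* Weighting the [fs i] by the least-squares residuals at a minimiser [x0] of
   [\sum_i (fs i - psi (fs i))^2] gives an [h] whose maximum [h x0] on the ball
   is below [psi h], contradicting [|psi h| <= supnorm L h]. *)
Lemma dual_elem_no_separation n (fs : 'I_n -> A -> R) : (forall i, Af0 (fs i)) ->
  ~ (forall x, L x <= 1 -> exists i, fs i x != psi (fs i)).
Proof.
move=> Afs fs_sep; have Kc := unit_ball_q_compact Hou Hlip Hcl.
pose G x := \sum_(i <- index_enum 'I_n) (fs i x - psi (fs i)) ^+ 2.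
have Gcont : q_continuous_on le e (unit_ball L) G.
  apply: q_continuous_sum => i; apply/q_continuous_sqr/q_continuousD.
    by case: (Afs i).
  exact: q_continuous_cst.
have [|x0 Lx0 x0min] := q_compact_argmin Hou Kc _ Gcont; first by exists 0; apply: unit_ball0.
pose h x := \sum_(i <- index_enum 'I_n) (psi (fs i) - fs i x0) * fs i x.
have Ah : Af0 h by apply: Af0_sum.
have G0 : 0 < G x0.
  have [i ne] := fs_sep x0 Lx0; rewrite /G (bigD1_seq i) ?mem_index_enum ?index_enum_uniq //=.
  have pos : 0 < (fs i x0 - psi (fs i)) ^+ 2 by rewrite lt_def sqrf_eq0 subr_eq0 ne sqr_ge0.
  by apply: (lt_le_trans pos); rewrite lerDl; apply: sumr_ge0 => j _; apply: sqr_ge0.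
have psih : psi h - h x0 = G x0.
  rewrite /psi /h /G dual_elem_sum // mulr_suml -sumrB; apply: eq_bigr => i _.
  by rewrite /psi; field; rewrite gt_eqF.
have hmax : forall y, L y <= 1 -> h y <= h x0.
  apply: (least_squares_optimality (K := unit_ball L) (unit_ball_convex hL)) Lx0 x0min.
  by move=> i; case: (Afs i).
have habs y : L y <= 1 -> `|h y| <= h x0.
  case: Ah => h0 _ haff Ly; rewrite ler_norml hmax // andbT lerNl.
  by rewrite -(affine_ballN hL h0 haff) // hmax ?unit_ballN.
have phih : phi h <= c * h x0.
  apply: le_trans (ler_norm _) (le_trans (phic Ah) _).
  by rewrite ler_pM2l // supnorm_le.
have : psi h * c = phi h by rewrite divfK ?gt_eqF.
by move: psih G0 phih c0; move: (psi h) => u; nra.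
Qed.

Lemma dual_elem_point : exists2 x, L x <= 1 & forall f, Af0 f -> phi f = c * f x.
Proof.
apply: contrapT => no_point.
have sep x : L x <= 1 -> exists2 f, Af0 f & f x != psi f.
  move=> Lx; apply: contrapT => no_f; apply: no_point; exists x => // f Af.
  have -> : f x = psi f by apply: contrapT => ne; apply: no_f; exists f => //; apply/eqP.
  by rewrite mulrC divfK ?gt_eqF.
have [n [fs [Afs fs_sep]]] := q_compact_separation Hou (unit_ball_q_compact Hou Hlip Hcl)
  (fun f (Af : Af0 f) => let: And3 _ fcont _ := Af in fcont) sep.
exact: dual_elem_no_separation Afs fs_sep.
Qed.

End Evaluation.

Lemma sigma_onto : exists a, forall f, Af0 f -> phi f = sigma L a f.
Proof.
have [c c0 phic] := dual_elem_bound; have [x Lx phix] := dual_elem_point c0 phic.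
exists (c *: x) => f Af; case: (Af) => f0 _ faff.
by rewrite /sigma (extZ hL f0 faff) (ext_le1 hL f0 faff) // phix.
Qed.

End Surjectivity.
End Duality.

Theorem theorem5p2 (R : realType) (A : lmodType R) (le : A -> A -> Prop) (e : A)
    (L : A -> R) :
  is_order_unit_space le e -> lip_norm le e L -> closed_seminorm le e L ->
  [/\ q_compact le e (unit_ball L),
      q_convex (unit_ball L) &
  [/\       (* sigma(a~) is an element of the dual of Af_0(K) *)
      (forall a, is_dual_elem le e L (sigma L a)),
      (* sigma is well defined on A/Re *)
      (forall a (t : R) f, Af0 le e L f -> sigma L (a + t *: e) f = sigma L a f),
      (* sigma is linear *)
      (forall (c : R) a b f, Af0 le e L f ->
          sigma L (c *: a + b) f = c * sigma L a f + sigma L b f),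
      (* sigma is isometric from (A/Re, L~) *)
      (forall a, dual_norm le e L (sigma L a) = L a) &
      (* sigma is onto the dual *)
      (forall phi, is_dual_elem le e L phi ->
          exists a, forall f, Af0 le e L f -> phi f = sigma L a f)]].
Proof.
move=> Hou Hlip Hcl; have hL := lip_seminorm Hlip.
split; [exact: unit_ball_q_compact | exact: unit_ball_convex | split].
- exact: sigma_dual.
- by move=> a t f Af; rewrite /sigma (ext_shift Hou Hlip).
- by move=> c a b f [f0 _ faff]; apply: ext_linear.
- exact: dual_norm_sigma.
- by move=> phi Hphi; apply: sigma_onto.
Qed.
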